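(* Consider testing $H_0^G:G\sim\mathcal G_d(N,1/2)$ versus $H_1^G:G\sim\mathcal G_d(N,1/2,\kappa)$ with $\kappa=N^\beta$, $0<\beta<1/2$, $d$ fixed. Let $C>0$ be a constant and let $f$ be a polynomial in the hyperedge indicator variables $(\mathcal A_e)_{e\in\binom{[N]}{d}}$ of $G$, of degree at most $D$ with $D\le C\log N$, such that $\mathbb E_{H_0^G}f(G)=0$ and $\mathbb E_{H_0^G}f(G)^2=1$. Then $\mathbb E_{H_1^G}f(G)=O(1)$, i.e. it is bounded by a constant not depending on $N$ or $f$.
   Context: $\mathcal G_d(N,1/2)$ is the random $d$-uniform hypergraph on $[N]$ where each $d$-element subset $e$ is a hyperedge independently with probability $1/2$; $\mathcal A_e\in\{0,1\}$ indicates whether $e$ is a hyperedge. $\mathcal G_d(N,1/2,\kappa)$ is obtained from $\mathcal G_d(N,1/2)$ by choosing a uniformly random $\kappa$-subset $K\subseteq[N]$ and adding all $d$-subsets of $K$ as hyperedges. *)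

From HB Require Import structures.
From mathcomp Require Import all_boot all_order all_algebra.
From mathcomp Require Import reals exp.
From mathcomp Require Import mpoly.

Set Implicit Arguments.
Unset Strict Implicit.
Unset Printing Implicit Defensive.

Import Order.TTheory GRing.Theory Num.Theory.
Local Open Scope ring_scope.

Definition hedge (N d : nat) : finType := {e : {set 'I_N} | #|e| == d}.

Definition hgraph (N d : nat) := {ffun hedge N d -> bool}.

Definition nvars (N d : nat) : nat := #|{: hedge N d}|.

(* Evaluation of a polynomial in the variables (A_e)_e at the hypergraph G:
   variable number i stands for the indicator of the i-th hyperedge
   (in the enumeration of hedge N d). *)
Definition polyfun (R : realType) (N d : nat) (p : {mpoly R[nvars N d]})
  (G : hgraph N d) : R :=
  p.@[fun i : 'I_(nvars N d) => ((G (enum_val i) : nat)%:R : R)].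

Definition E0 (R : realType) (N d : nat) (f : hgraph N d -> R) : R :=
  (#|{: hgraph N d}|%:R)^-1 * \sum_(G : hgraph N d) f G.

Definition plant (N d : nat) (K : {set 'I_N}) (G : hgraph N d) : hgraph N d :=
  [ffun e : hedge N d => G e || (val e \subset K)].

(* Expectation under H_1: G ~ G_d(N, 1/2, kappa): K uniform among the
   kappa-subsets of [N], independent of G0 ~ G_d(N,1/2), and G = plant K G0. *)
Definition E1 (R : realType) (N d kappa : nat) (f : hgraph N d -> R) : R :=
  (#|[set K : {set 'I_N} | #|K| == kappa]|%:R)^-1 *
  \sum_(K : {set 'I_N} | #|K| == kappa) E0 (fun G => f (plant K G)).

(* kappa = N^beta, rounded down to an integer. *)
Definition kappa_of (R : realType) (N : nat) (beta : R) : nat :=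
  Num.truncn ((N%:R : R) `^ beta).

From HB Require Import structures.
From mathcomp Require Import all_boot all_order all_algebra.
From mathcomp Require Import reals exp sequences.
From mathcomp Require Import mpoly.
From mathcomp Require Import ring lra zify.
Import Order.TTheory GRing.Theory Num.Theory.
Local Open Scope ring_scope.
Set Implicit Arguments.
Unset Strict Implicit.
Unset Printing Implicit Defensive.

(* We expand f in the Walsh basis chi_S(G) = prod_{e in S} (2 A_e - 1), S a set of
   hyperedges, of the uniform measure on hypergraphs (H_0).  Planting K turns chi_S into
   the indicator that K contains the vertex cover of S, so
   E_{H_1} f = sum_S fhat(S) P[cover S \subset K].  For f of degree at most D with
   E_{H_0} f = 0, only the low sets 0 < |S| <= D carry Fourier mass, and Parseval
   gives |E_{H_1} f| <= (1 + sum_{S low} P[cover S \subset K]^2) / 2.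
   Grouping the low sets S by their cover W, with w = |W|, the sum is at most
   sum_w h(w) (kappa^2/N)^w, where h(w) bounds the number of low S covering a w-set:
   h(w) <= 2^(w^d) is a constant for small w, while h(w) <= D w^(dD) is beaten
   by (kappa^2/N)^w <= N^(-(1-2 beta) w) for w beyond a constant threshold. *)

Section FourierAnalysis.
Variables (R : realType) (N d : nat).
Local Notation edge := (hedge N d).
Local Notation graph := (hgraph N d).

Definition sgnb (b : bool) : R := if b then 1 else -1.

Lemma sgnbN (b : bool) : sgnb (~~ b) = - sgnb b.
Proof. by case: b; rewrite /sgnb ?opprK. Qed.

Definition chi (S : {set edge}) (G : graph) : R := \prod_(e in S) sgnb (G e).

Definition flip (e0 : edge) (G : graph) : graph :=
  [ffun e => if e == e0 then ~~ G e else G e].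

Lemma flipK (e0 : edge) : involutive (flip e0).
Proof.
move=> G; apply/ffunP => e; rewrite !ffunE.
by case: eqP => // _; rewrite negbK.
Qed.

Lemma sum_flip_odd (e0 : edge) (h : graph -> R) :
  (forall G, h (flip e0 G) = - h G) -> \sum_G h G = 0.
Proof.
move=> h_odd.
have sum_eq_opp : \sum_G h G = - \sum_G h G.
  rewrite {1}(reindex_inj (inv_inj (@flipK e0))) /= -sumrN.
  by apply: eq_bigr => G _; rewrite h_odd.
by move: sum_eq_opp; lra.
Qed.

Lemma chi_flip (S : {set edge}) (e0 : edge) (G : graph) :
  e0 \in S -> chi S (flip e0 G) = - chi S G.
Proof.
move=> e0S; rewrite /chi (bigD1 e0) //= [in RHS](bigD1 e0) //= ffunE eqxx sgnbN.
rewrite mulNr; congr (- (_ * _)); apply: eq_bigr => e /andP[_ /negbTE ne].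
by rewrite ffunE ne.
Qed.

Lemma card_graph_neq0 : (#|{: graph}|%:R : R) != 0.
Proof. by rewrite card_ffun card_bool pnatr_eq0 -lt0n expn_gt0. Qed.

Lemma E0_ext (f g : graph -> R) : f =1 g -> E0 f = E0 g.
Proof. by move=> fg; rewrite /E0; congr (_ * _); apply: eq_bigr => G _. Qed.

Lemma E0_lin (I : finType) (c : I -> R) (F : I -> graph -> R) :
  E0 (fun G => \sum_i c i * F i G) = \sum_i c i * E0 (F i).
Proof.
rewrite /E0 exchange_big mulr_sumr; apply: eq_bigr => i _.
by rewrite -mulr_sumr mulrCA.
Qed.

Lemma E0_const1 : E0 (fun _ : graph => (1 : R)) = 1.
Proof. by rewrite /E0 sumr_const -[_ *+ _]mulr_natr mul1r mulVf ?card_graph_neq0. Qed.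

Lemma chi_orthogonality (G H : graph) :
  \sum_(S : {set edge}) chi S G * chi S H = #|{: graph}|%:R * (G == H)%:R.
Proof.
have -> : \sum_S chi S G * chi S H = \prod_e (sgnb (G e) * sgnb (H e) + 1).
  rewrite bigA_distr; apply: eq_big => // S _.
  by rewrite -big_mkcond big_split.
have [<- | neqGH] := eqVneq G H.
  rewrite mulr1 card_ffun card_bool natrX -prodr_const.
  by apply: eq_bigr => e _; case: (G e); rewrite /sgnb ?mulrNN mulr1.
have [e neq_e] : exists e, G e != H e.
  apply/existsP; apply: contraNT neqGH => /existsPn same.
  by apply/eqP/ffunP => e; apply/eqP; rewrite -[_ == _]negbK same.
rewrite mulr0 (bigD1 e) //=.
by case: (G e) (H e) neq_e => [] [] //= _;
  rewrite /sgnb ?mulrN ?mulNr ?mulr1 ?mul1r addNr mul0r.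
Qed.

Definition fourier (f : graph -> R) (S : {set edge}) : R :=
  E0 (fun G => f G * chi S G).

Lemma fourier_expansion (f : graph -> R) (G : graph) :
  f G = \sum_S fourier f S * chi S G.
Proof.
rewrite /fourier /E0.
under eq_bigr => S _ do rewrite -mulrA mulr_suml.
rewrite -mulr_sumr exchange_big /=.
have inner H : \sum_S f H * chi S H * chi S G = f H * (#|{: graph}|%:R * (H == G)%:R).
  by rewrite -chi_orthogonality mulr_sumr; apply: eq_bigr => S _; rewrite mulrA.
under eq_bigr => H _ do rewrite inner.
rewrite (bigD1 G) //= eqxx big1 ?addr0; last by move=> H /negbTE ->; rewrite !mulr0.
by rewrite mulr1 mulrCA mulVf ?mulr1 ?card_graph_neq0.
Qed.

Lemma parseval (f : graph -> R) :
  E0 (fun G => f G ^+ 2) = \sum_S fourier f S ^+ 2.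
Proof.
rewrite (@E0_ext _ (fun G => \sum_S fourier f S * (f G * chi S G))).
  by rewrite E0_lin; apply: eq_bigr => S _; rewrite expr2.
move=> G; rewrite expr2 {2}(fourier_expansion f G) mulr_sumr.
by apply: eq_bigr => S _; rewrite mulrCA.
Qed.

End FourierAnalysis.

Section PlantedModel.
Variables (R : realType) (N d : nat).
Local Notation edge := (hedge N d).
Local Notation graph := (hgraph N d).

Definition cover (S : {set edge}) : {set 'I_N} := \bigcup_(e in S) val e.

Definition pcontain (k : nat) (W : {set 'I_N}) : R :=
  (#|[set K : {set 'I_N} | #|K| == k]|%:R)^-1 *
  \sum_(K : {set 'I_N} | #|K| == k) (W \subset K)%:R.

(* Once K is planted, chi_S is identically 1 if S covers only vertices of K;
   otherwise some hyperedge of S stays uniform and its sign averages out. *)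
Lemma E0_chi_plant (S : {set edge}) (K : {set 'I_N}) :
  E0 (fun G => chi R S (plant K G)) = (cover S \subset K)%:R.
Proof.
have [/bigcupsP inK | notinK] := boolP (cover S \subset K).
  rewrite -(E0_const1 R N d); apply: E0_ext => G.
  by rewrite /chi big1 // => e eS; rewrite ffunE inK ?orbT.
have [e eS e_out] : exists2 e, e \in S & ~~ (val e \subset K).
  apply/exists_inP; apply: contraNT notinK => /exists_inPn e_in.
  by apply/bigcupsP => e eS; have := e_in e eS; rewrite negbK.
rewrite /E0 (@sum_flip_odd R N d e) ?mulr0 ?(negbTE notinK) // => G.
rewrite -(chi_flip R (plant K G) eS); congr (chi R S _).
apply/ffunP => e'; rewrite !ffunE.
by case: eqP => [->|//]; rewrite (negbTE e_out) !orbF.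
Qed.

Lemma E1_fourier (k : nat) (f : graph -> R) :
  E1 k f = \sum_S fourier f S * pcontain k (cover S).
Proof.
have planted K : E0 (fun G => f (plant K G))
                 = \sum_S fourier f S * (cover S \subset K)%:R.
  rewrite (@E0_ext R N d _ (fun G => \sum_S fourier f S * chi R S (plant K G))).
    by rewrite E0_lin; apply: eq_bigr => S _; rewrite E0_chi_plant.
  by move=> G; rewrite -fourier_expansion.
rewrite /E1 /pcontain; under eq_bigr => K _ do rewrite planted.
rewrite exchange_big mulr_sumr; apply: eq_bigr => S _.
by rewrite -mulr_sumr mulrCA.
Qed.

End PlantedModel.

(* The non-empty sets of size at most D: the possible Fourier support of a
   centered polynomial of degree at most D in the hyperedge indicators. *)
Definition low (T : finType) (D : nat) (S : {set T}) : bool :=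
  (0 < #|S|)%N && (#|S| <= D)%N.

Section LowDegree.
Variables (R : realType) (N d : nat).
Local Notation edge := (hedge N d).
Local Notation graph := (hgraph N d).

Lemma fourier_set0 (f : graph -> R) : fourier f set0 = E0 f.
Proof. by apply: E0_ext => G; rewrite /chi big_set0 mulr1. Qed.

(* A monomial of degree at most D misses some hyperedge of S when #|S| > D; toggling
   that hyperedge leaves the monomial unchanged and flips chi_S, so the two are
   orthogonal. *)
Lemma fourier_polyfun_high (D : nat) (p : {mpoly R[nvars N d]}) (S : {set edge}) :
  (msize p <= D.+1)%N -> (D < #|S|)%N -> fourier (polyfun p) S = 0.
Proof.
move=> size_p large_S; rewrite /fourier /E0.
under eq_bigr => G _ do rewrite /polyfun mevalE mulr_suml.
rewrite exchange_big big1_seq ?mulr0 // => m /andP[_ m_supp].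
have deg_m : (mdeg m < D.+1)%N := leq_trans (msize_mdeg_lt m_supp) size_p.
have [e0 e0S /eqP m_e0] : exists2 e0, e0 \in S & m (enum_rank e0) == 0%N.
  apply/exists_inP; apply: contraLR large_S.
  rewrite negb_exists_in => /forall_inP m_S.
  rewrite -leqNgt -ltnS; apply: leq_trans deg_m.
  rewrite ltnS mdegE (reindex (@enum_rank edge)) /=; last first.
    by apply: onW_bij; apply: enum_rank_bij.
  rewrite [X in (_ <= X)%N](bigID (mem S)) /=; apply: leq_trans (leq_addr _ _).
  by rewrite -sum1_card; apply: leq_sum => e eS; rewrite lt0n m_S.
apply: (@sum_flip_odd R N d e0) => G.
rewrite (chi_flip R G e0S) mulrN; congr (- (_ * _)); congr (_ * _).
apply: eq_bigr => i _.
have [->|ne] := eqVneq i (enum_rank e0); first by rewrite m_e0 !expr0.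
rewrite ffunE; case: eqP => // i_e0; move: ne.
by rewrite -i_e0 enum_valK eqxx.
Qed.

(* If f has no Fourier mass outside the low sets, Cauchy-Schwarz in the form
   |ab| <= (a^2+b^2)/2 together with Parseval bounds its H_1-expectation. *)
Lemma E1_low_bound (D k : nat) (f : graph -> R) :
  (forall S, ~~ low D S -> fourier f S = 0) ->
  `|E1 k f| <=
  (E0 (fun G => f G ^+ 2)
   + \sum_(S : {set edge} | low D S) pcontain R k (cover S) ^+ 2) / 2.
Proof.
move=> vanish.
rewrite E1_fourier (bigID (low D)) /= [X in _ + X]big1 ?addr0; last first.
  by move=> S /vanish ->; rewrite mul0r.
apply: le_trans (ler_norm_sum _ _ _) _.
apply: le_trans (_ : \sum_(S | low D S)
   (fourier f S ^+ 2 + pcontain R k (cover S) ^+ 2) / 2 <= _).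
  apply: ler_sum => S _; rewrite normrM.
  rewrite -[fourier f S ^+ 2]real_normK ?num_real //.
  rewrite -[pcontain R k _ ^+ 2]real_normK ?num_real //.
  exact: (leif_mean_square _ _).1.
rewrite -mulr_suml big_split /= ler_pM2r ?invr_gt0 //; apply: lerD => //.
rewrite parseval [X in _ <= X](bigID (low D)) /= lerDl.
by apply: sumr_ge0 => S _; apply: sqr_ge0.
Qed.

Lemma fourier_polyfun_low (D : nat) (p : {mpoly R[nvars N d]}) :
  (msize p <= D.+1)%N -> E0 (polyfun p) = 0 ->
  forall S : {set edge}, ~~ low D S -> fourier (polyfun p) S = 0.
Proof.
move=> size_p mean0 S; rewrite /low negb_and -leqNgt -ltnNge leqn0.
case/orP => [/eqP/cards0_eq -> | S_large]; first by rewrite fourier_set0.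
exact: fourier_polyfun_high size_p S_large.
Qed.

End LowDegree.

Lemma ffact_le_exp (n m : nat) : (n ^_ m <= n ^ m)%N.
Proof.
elim: m => [|m IH]; first by rewrite ffactn0 expn0.
by rewrite ffactnSr expnSr leq_mul // leq_subr.
Qed.

Lemma bin_le_exp (n m : nat) : ('C(n, m) <= n ^ m)%N.
Proof.
apply: leq_trans (ffact_le_exp n m); rewrite -bin_ffact.
by apply: leq_pmulr; apply: fact_gt0.
Qed.

(* Count pairs (injective w-tuple of [N], k-set containing it) in two ways. *)
Lemma ffact_binom_identity (N k w : nat) : (w <= k)%N -> (k <= N)%N ->
  ('C(N - w, k - w) * N ^_ w = 'C(N, k) * k ^_ w)%N.
Proof.
move=> wk kN.
have fact_pos : (0 < (k - w)`! * (N - k)`!)%N by rewrite muln_gt0 !fact_gt0.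
apply/eqP; rewrite -(eqn_pmul2r fact_pos); apply/eqP.
have N_k : (N - w - (k - w) = N - k)%N by lia.
have := bin_fact (leq_sub2r w kN); rewrite N_k => bin_Nw.
have := bin_fact kN; rewrite -(ffact_fact wk) => bin_N.
rewrite -(ffact_fact (leq_trans wk kN)) -bin_Nw in bin_N.
transitivity (N ^_ w * ('C(N - w, k - w) * ((k - w)`! * (N - k)`!)))%N; first by ring.
by rewrite -bin_N; ring.
Qed.

(* (k)_w / (N)_w <= (k/N)^w, since (k-i)/(N-i) <= k/N. *)
Lemma ffact_ratio (k N w : nat) : (k <= N)%N -> (k ^_ w * N ^ w <= N ^_ w * k ^ w)%N.
Proof.
move=> kN; elim: w => [|w IH]; first by rewrite !ffactn0 !expn0.
rewrite !ffactnSr !expnSr mulnACA [X in (_ <= X)%N]mulnACA.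
by apply: leq_mul IH _; nia.
Qed.

(* The key binomial estimate, cleared of denominators: for a w-set W and a uniform
   k-set K, P[W \subset K] = C(N-w,N-k)/C(N,k) and C(N,w) P[W \subset K]^2 <= (k^2/N)^w. *)
Lemma containment_ratio_nat (N k w : nat) : (k <= N)%N ->
  ('C(N, w) * 'C(N - w, N - k) ^ 2 * N ^ w <= 'C(N, k) ^ 2 * k ^ (2 * w))%N.
Proof.
move=> kN; have [kw | wk] := ltnP k w.
  have [wN | Nw] := leqP w N; last by rewrite bin_small.
  by rewrite (@bin_small (N - w) (N - k)) ?muln0 ?mul0n //; lia.
have F_gt0 : (0 < N ^_ w * N ^_ w)%N by rewrite muln_gt0 ffact_gt0 (leq_trans wk kN).
have c_le : ('C(N, w) <= N ^_ w)%N by rewrite -bin_ffact leq_pmulr ?fact_gt0.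
have f_le : (k ^_ w <= k ^ w)%N := ffact_le_exp k w.
have -> : (N - k = N - w - (k - w))%N by lia.
rewrite bin_sub; last by lia.
have ident := ffact_binom_identity wk kN.
set a := 'C(N - w, k - w) in ident *; set b := 'C(N, k) in ident *.
set c := 'C(N, w) in c_le *; set f := k ^_ w in ident f_le *.
rewrite -(leq_pmul2r F_gt0).
have -> : (c * a ^ 2 * N ^ w * (N ^_ w * N ^_ w) = b ^ 2 * (c * f) * (f * N ^ w))%N.
  by transitivity (c * (a * N ^_ w) ^ 2 * N ^ w)%N; [ring | rewrite ident; ring].
have -> : (b ^ 2 * k ^ (2 * w) * (N ^_ w * N ^_ w)
           = b ^ 2 * (N ^_ w * k ^ w) * (N ^_ w * k ^ w))%N.
  by rewrite mul2n -addnn expnD; ring.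
by apply: leq_mul; [apply: leq_mul (leq_mul c_le f_le) | exact: ffact_ratio].
Qed.

Section SmallSubsets.
Variables (T : finType) (A : {set T}).

Lemma card_low_subsets_pow2 (D : nat) :
  (#|[set S : {set T} | S \subset A & low D S]| <= 2 ^ #|A|)%N.
Proof.
rewrite -card_powerset; apply: subset_leq_card; apply/subsetP => S.
by rewrite !inE => /andP[].
Qed.

(* Polynomial bound, good for small D: at most C(m,1) + ... + C(m,D) <= D m^D sets. *)
Lemma card_low_subsets_poly (D : nat) :
  (#|[set S : {set T} | S \subset A & low D S]| <= D * #|A| ^ D)%N.
Proof.
elim: D => [|D IH].
  rewrite mul0n leqn0 cards_eq0; apply/eqP/setP => S.
  by rewrite !inE /low; apply/negbTE/and3P => -[_ + le0]; rewrite ltnNge le0.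
have split_top : [set S : {set T} | S \subset A & low D.+1 S] \subset
    [set S : {set T} | S \subset A & low D S] :|:
    [set S : {set T} | S \subset A & #|S| == D.+1].
  apply/subsetP => S; rewrite !inE /low => /andP[-> /andP[S_gt0]].
  by rewrite leq_eqVlt ltnS => /orP[->|->]; rewrite ?orbT ?S_gt0.
apply: leq_trans (subset_leq_card split_top) _.
apply: leq_trans (leq_card_setU _ _).1 _.
rewrite cards_draws mulSn [X in (_ <= X)%N]addnC leq_add ?bin_le_exp //.
apply: leq_trans IH _; rewrite leq_mul2l.
have [-> | A_gt0] := posnP #|A|; last by rewrite leq_pexp2l ?orbT.
by case: D {split_top} => // D; rewrite !exp0n.
Qed.

End SmallSubsets.

Section Covers.
Variables (N d D : nat).
Local Notation edge := (hedge N d).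

Definition edges_in (W : {set 'I_N}) : {set edge} := [set e : edge | val e \subset W].

Lemma card_edges_in (W : {set 'I_N}) : (#|edges_in W| <= #|W| ^ d)%N.
Proof.
apply: leq_trans (bin_le_exp #|W| d).
rewrite -cards_draws -(card_imset _ val_inj); apply: subset_leq_card.
apply/subsetP => B /imsetP[e]; rewrite !inE => eW ->.
by rewrite eW; case: e eW.
Qed.

Definition ncover (W : {set 'I_N}) : nat :=
  #|[set S : {set edge} | low D S & cover S == W]|.

Lemma ncover_le_low_subsets (W : {set 'I_N}) :
  (ncover W <= #|[set S : {set edge} | S \subset edges_in W & low D S]|)%N.
Proof.
apply: subset_leq_card; apply/subsetP => S; rewrite !inE => /andP[lowS /eqP <-].
by rewrite lowS andbT; apply/subsetP => e eS; rewrite inE (bigcup_sup e eS).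
Qed.

Lemma ncover_le_pow2 (W : {set 'I_N}) : (ncover W <= 2 ^ (#|W| ^ d))%N.
Proof.
apply: leq_trans (ncover_le_low_subsets W) _.
apply: leq_trans (card_low_subsets_pow2 _ _) _.
by rewrite leq_pexp2l ?card_edges_in.
Qed.

Lemma ncover_le_poly (W : {set 'I_N}) : (ncover W <= D * #|W| ^ (d * D))%N.
Proof.
apply: leq_trans (ncover_le_low_subsets W) _.
apply: leq_trans (card_low_subsets_poly _ _) _.
rewrite expnM leq_mul2l; have [// | D_gt0] := posnP D.
by rewrite leq_exp2r ?card_edges_in ?orbT.
Qed.

Definition cover_profile (w0 w : nat) : nat :=
  (if w < w0 then 2 ^ (w0 ^ d) else D * w ^ (d * D))%N.

Lemma ncover_le_profile (w0 : nat) (W : {set 'I_N}) :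
  (0 < d)%N -> (ncover W <= cover_profile w0 #|W|)%N.
Proof.
move=> d_gt0; rewrite /cover_profile; case: ifP => W_small; last exact: ncover_le_poly.
apply: leq_trans (ncover_le_pow2 W) _.
by rewrite leq_pexp2l // leq_exp2r // ltnW.
Qed.

End Covers.

Section ContainmentProbability.
Variables (R : realType) (N : nat).

Lemma cardC_ord (W : {set 'I_N}) : #|~: W| = (N - #|W|)%N.
Proof. by rewrite cardsCs setCK card_ord. Qed.

(* Complementation maps the k-sets containing W onto the (N-k)-sets avoiding W. *)
Lemma card_supsets (k : nat) (W : {set 'I_N}) : (k <= N)%N ->
  #|[set K : {set 'I_N} | #|K| == k & W \subset K]| = 'C(N - #|W|, N - k).
Proof.
move=> kN; rewrite -cardC_ord -cards_draws -(card_imset _ (@setC_inj _)).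
apply: eq_card => B; apply/imsetP/idP => [[K]|].
  by rewrite !inE => /andP[/eqP cK WK] ->; rewrite setCS WK cardC_ord cK eqxx.
rewrite inE => /andP[BW /eqP cB]; exists (~: B); last by rewrite setCK.
by rewrite inE -setCS setCK BW andbT cardC_ord cB subKn.
Qed.

Lemma pcontain_binom (k : nat) (W : {set 'I_N}) : (k <= N)%N ->
  pcontain R k W = 'C(N - #|W|, N - k)%:R / 'C(N, k)%:R.
Proof.
move=> kN; rewrite /pcontain card_draws card_ord mulrC -card_supsets //.
congr (_ / _); rewrite -sum1_card natr_sum big_mkcond [RHS]big_mkcond /=.
by apply: eq_bigr => K _; rewrite inE; case: (#|K| == k); case: (W \subset K).
Qed.

End ContainmentProbability.

Section SecondMoment.
Variables (R : realType) (N d D k : nat).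
Hypotheses (N_gt0 : (0 < N)%N) (kN : (k <= N)%N).
Local Notation edge := (hedge N d).

Lemma containment_ratio (w : nat) :
  'C(N, w)%:R * ('C(N - w, N - k)%:R / 'C(N, k)%:R) ^+ 2
  <= ((k%:R : R) ^+ 2 / N%:R) ^+ w.
Proof.
have b_gt0 : 0 < ('C(N, k)%:R : R) ^+ 2 by rewrite exprn_gt0 // ltr0n bin_gt0.
have Nw_gt0 : 0 < (N%:R : R) ^+ w by rewrite exprn_gt0 // ltr0n.
rewrite !expr_div_n -exprM mulrA ler_pdivrMr // mulrAC ler_pdivlMr //.
by rewrite -!natrX -!natrM ler_nat [X in (_ <= X)%N]mulnC containment_ratio_nat.
Qed.

Lemma sum_by_card (F : nat -> R) :
  \sum_(W : {set 'I_N}) F #|W| = \sum_(w < N.+1) 'C(N, w)%:R * F w.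
Proof.
rewrite (partition_big (fun W : {set 'I_N} => inord #|W| : 'I_N.+1) predT) //=.
apply: eq_bigr => w _.
have card_W (W : {set 'I_N}) : (inord #|W| == w :> 'I_N.+1) = (#|W| == w).
  by rewrite -val_eqE /= inordK // ltnS (leq_trans (max_card _)) ?card_ord.
rewrite (eq_bigr (fun=> F w)) => [|W]; last by rewrite card_W => /eqP ->.
rewrite (eq_bigl (mem [set W : {set 'I_N} | #|W| == w])) => [|W]; last first.
  by rewrite !inE card_W.
by rewrite sumr_const card_draws card_ord mulr_natl.
Qed.

Lemma second_moment_bound (h : nat -> R) :
  (forall w, 0 <= h w) -> (forall W : {set 'I_N}, (ncover d D W)%:R <= h #|W|) ->
  \sum_(S : {set edge} | low D S) pcontain R k (cover S) ^+ 2
  <= \sum_(w < N.+1) h w * ((k%:R : R) ^+ 2 / N%:R) ^+ w.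
Proof.
move=> h_ge0 h_ncover.
rewrite (partition_big (@cover N d) predT) //=.
have -> : \sum_(W : {set 'I_N})
            \sum_(S : {set edge} | low D S && (cover S == W)) pcontain R k (cover S) ^+ 2
          = \sum_(W : {set 'I_N}) (ncover d D W)%:R * pcontain R k W ^+ 2.
  apply: eq_bigr => W _; rewrite /ncover -sum1_card natr_sum mulr_suml.
  apply: eq_big => [S|S]; first by rewrite inE.
  by move=> /andP[_ /eqP ->]; rewrite mul1r.
apply: le_trans (_ : \sum_(W : {set 'I_N}) h #|W| * pcontain R k W ^+ 2 <= _).
  by apply: ler_sum => W _; apply: ler_wpM2r; [apply: sqr_ge0 | apply: h_ncover].
have := sum_by_card (fun w => h w * ('C(N - w, N - k)%:R / 'C(N, k)%:R) ^+ 2).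
rewrite /=; under eq_bigr => W _ do rewrite -pcontain_binom //; move=> ->.
apply: ler_sum => w _; rewrite mulrCA; apply: ler_wpM2l => //.
exact: containment_ratio.
Qed.

End SecondMoment.

Section Asymptotics.
Variable R : realType.

Lemma eventually_log_le_linear (eps c a : R) : 0 < eps -> 0 <= a ->
  exists w0 : nat, (0 < w0)%N /\
    forall w : nat, (w0 <= w)%N -> c + a * ln (w%:R : R) <= eps * w%:R.
Proof.
move=> eps_gt0 a_ge0.
pose k0 := 2 * a / eps + 1.
have k0_gt0 : 0 < k0 by rewrite ltr_pwDr // divr_ge0 ?mulr_ge0 // ltW.
have a_k0 : a / k0 <= eps / 2.
  rewrite ler_pdivrMr // (_ : eps / 2 * k0 = a + eps / 2); first by lra.
  by rewrite /k0; field; rewrite gt_eqF.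
pose c1 := c + a * ln k0.
exists (Num.truncn (2 * `|c1| / eps)).+1; split => // w w_large.
have w_large_real : 2 * `|c1| / eps < w%:R.
  by apply: lt_le_trans (truncnS_gt _) _; rewrite ler_nat.
have w_gt0 : 0 < (w%:R : R) by rewrite ltr0n (leq_trans _ w_large).
have ln_w : ln (w%:R : R) <= w%:R / k0 + ln k0.
  have := ln_sublinear (divr_gt0 w_gt0 k0_gt0).
  by rewrite ln_div ?posrE //; lra.
have lin_w : a * (w%:R / k0) <= eps / 2 * w%:R.
  by rewrite mulrA mulrAC ler_wpM2r ?ler0n.
have c1_w : `|c1| <= eps / 2 * w%:R.
  move: w_large_real; rewrite ltr_pdivrMr // => /ltW; lra.
have := ler_wpM2l a_ge0 ln_w; have := ler_norm c1; rewrite /c1; lra.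
Qed.

Lemma tail_term_small (N D w d : nat) (C eps x : R) :
  (2 <= N)%N -> (0 < w)%N -> 0 <= C -> D%:R <= C * ln (N%:R : R) ->
  0 <= x -> x <= expR (- (eps * ln (N%:R : R))) ->
  C + 2 + d%:R * C * ln (w%:R : R) <= eps * w%:R ->
  (D * w ^ (d * D))%N%:R * x ^+ w <= (N.+1%:R)^-1.
Proof.
move=> N_ge2 w_gt0 C_ge0 D_le x_ge0 x_le w_large.
set L := ln (N%:R : R).
have N_gt0 : 0 < (N%:R : R) by rewrite ltr0n (leq_trans _ N_ge2).
have L_ge0 : 0 <= L by rewrite ln_ge0 // ler1n (leq_trans _ N_ge2).
have wR_gt0 : 0 < (w%:R : R) by rewrite ltr0n.
have lnw_ge0 : 0 <= ln (w%:R : R) by rewrite ln_ge0 // ler1n.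
have D_exp : (D%:R : R) <= expR (C * L).
  apply: le_trans (_ : expR D%:R <= _); last by rewrite ler_expR.
  by have := expR_ge1Dx (D%:R : R); lra.
have pow_exp : ((w ^ (d * D))%N%:R : R) <= expR (d%:R * C * L * ln (w%:R : R)).
  rewrite natrX -{1}(lnK (wR_gt0 : w%:R \in Num.pos)) -expRM_natr ler_expR natrM.
  rewrite [X in _ <= X]mulrC; apply: ler_wpM2l => //; rewrite -mulrA.
  by apply: ler_wpM2l => //; exact: ler0n.
have geom_exp : x ^+ w <= expR (- (eps * L) * w%:R).
  by rewrite expRM_natr; apply: lerXn2r; rewrite ?nnegrE ?expR_ge0.
have N1_exp : (N.+1%:R : R) <= expR (2 * L).
  rewrite -[2]/(2%:R) mulrC expRM_natr lnK ?posrE // -natrX ler_nat.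
  by rewrite expnS expn1 -{1}[N]muln1 ltn_pmul2l // (leq_trans _ N_ge2).
have total : expR (C * L) * expR (d%:R * C * L * ln w%:R) *
             expR (- (eps * L) * w%:R) * expR (2 * L) <= 1.
  rewrite -!expRD -[X in _ <= X]expR0 ler_expR.
  have -> : C * L + d%:R * C * L * ln w%:R + - (eps * L) * w%:R + 2 * L =
            L * (C + 2 + d%:R * C * ln w%:R - eps * w%:R) by ring.
  by apply: mulr_ge0_le0 => //; lra.
rewrite -(ler_pM2r (_ : 0 < N.+1%:R)) ?ltr0n // mulVf ?lt0r_neq0 ?ltr0n //.
apply: le_trans total; rewrite natrM.
apply: ler_pM; rewrite ?mulr_ge0 ?exprn_ge0 ?ler0n //.
apply: ler_pM; rewrite ?mulr_ge0 ?exprn_ge0 ?ler0n //.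
exact: ler_pM.
Qed.

Lemma kappa_le_expR (N : nat) (beta : R) : (0 < N)%N ->
  (kappa_of N beta)%:R <= expR (beta * ln (N%:R : R)).
Proof.
move=> N_gt0; rewrite /kappa_of /powR gt_eqF ?ltr0n //.
by rewrite truncn_le expR_ge0.
Qed.

Lemma kappa_ratio_decay (N : nat) (beta : R) : (0 < N)%N ->
  (kappa_of N beta)%:R ^+ 2 / N%:R <= expR (- ((1 - 2 * beta) * ln (N%:R : R))).
Proof.
move=> N_gt0; set L := ln (N%:R : R).
have -> : expR (- ((1 - 2 * beta) * L)) = expR (beta * L) ^+ 2 * expR (- L).
  by rewrite -expRM_natr -expRD; congr expR; ring.
rewrite expRN lnK ?posrE ?ltr0n // ler_wpM2r ?invr_ge0 ?ler0n //.
by rewrite lerXn2r ?nnegrE ?ler0n ?expR_ge0 ?kappa_le_expR.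
Qed.

Lemma kappa_ratio_le1 (N : nat) (beta : R) : (0 < N)%N -> beta < 1 / 2 ->
  0 <= ((kappa_of N beta)%:R : R) ^+ 2 / N%:R <= 1.
Proof.
move=> N_gt0 beta_lt; rewrite divr_ge0 ?sqr_ge0 ?ler0n //=.
apply: le_trans (kappa_ratio_decay beta N_gt0) _.
rewrite -[X in _ <= X]expR0 ler_expR oppr_le0.
by apply: mulr_ge0; [lra | rewrite ln_ge0 // ler1n].
Qed.

Lemma kappa_le (N : nat) (beta : R) : (0 < N)%N -> beta <= 1 -> (kappa_of N beta <= N)%N.
Proof.
move=> N_gt0 beta_le1; rewrite -(ler_nat R); apply: le_trans (kappa_le_expR beta N_gt0) _.
rewrite -[X in _ <= X](@lnK _ N%:R) ?posrE ?ltr0n // ler_expR ler_piMl //.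
by rewrite ln_ge0 // ler1n.
Qed.

Lemma split_sum_bound (N w0 : nat) (h : nat -> R) (x A : R) :
  (w0 <= N.+1)%N -> 0 <= x <= 1 -> (forall w, (w < w0)%N -> 0 <= h w <= A) ->
  (forall w, (w0 <= w)%N -> h w * x ^+ w <= (N.+1%:R)^-1) ->
  \sum_(w < N.+1) h w * x ^+ w <= A *+ w0 + 1.
Proof.
move=> w0_le /andP[x_ge0 x_le1] head tail.
rewrite -(big_mkord xpredT (fun w => h w * x ^+ w)) (@big_cat_nat _ _ _ w0 0 N.+1) //=.
apply: lerD.
  apply: le_trans (_ : \sum_(0 <= w < w0) A <= _); last by rewrite sumr_const_nat subn0.
  apply: ler_sum_nat => w /= w_lt.
  have /andP[h_ge0 h_le] := head w w_lt.
  by apply: le_trans h_le; apply: ler_piMr => //; apply: exprn_ile1.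
apply: le_trans (_ : \sum_(w0 <= w < N.+1) (N.+1%:R : R)^-1 <= _).
  by apply: ler_sum_nat => w /andP[w_ge _]; apply: tail.
rewrite sumr_const_nat -[_ *+ (N.+1 - w0)]mulr_natr.
rewrite -[X in _ <= X](@mulVf _ N.+1%:R) ?pnatr_eq0 //.
by rewrite ler_wpM2l ?invr_ge0 ?ler0n // ler_nat leq_subr.
Qed.

End Asymptotics.

Theorem mainTheorem12 (R : realType) (d : nat) (beta C : R) :
  (0 < d)%N -> 0 < beta -> beta < 1 / 2 -> 0 < C ->
  exists (M : R) (N0 : nat), forall (N D : nat), (N0 <= N)%N ->
    (D%:R <= C * ln (N%:R : R)) ->
    forall p : {mpoly R[nvars N d]}, (msize p <= D.+1)%N ->
      E0 (polyfun p) = 0 ->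
      E0 (fun G => polyfun p G ^+ 2) = 1 ->
      `|E1 (kappa_of N beta) (polyfun p)| <= M.
Proof.
move=> d_gt0 _ beta_lt C_gt0.
pose eps := 1 - 2 * beta.
have eps_gt0 : 0 < eps by rewrite /eps; lra.
have [w0 [w0_gt0 w0_large]] :=
  eventually_log_le_linear (C + 2) eps_gt0 (mulr_ge0 (ler0n R d) (ltW C_gt0)).
pose A : R := (2 ^ (w0 ^ d))%N%:R.
exists ((1 + (A *+ w0 + 1)) / 2), (maxn 2 w0).
move=> N D N_large D_le p size_p mean0 var1.
have N_ge2 : (2 <= N)%N := leq_trans (leq_maxl 2 w0) N_large.
have N_gt0 : (0 < N)%N := ltnW N_ge2.
have kN : (kappa_of N beta <= N)%N by apply: kappa_le => //; lra.
apply: le_trans (@E1_low_bound R N d D _ _ (fourier_polyfun_low size_p mean0)) _.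
rewrite var1 ler_pM2r ?invr_gt0 //; apply: lerD => //.
pose h w : R := (cover_profile d D w0 w)%:R.
apply: le_trans (@second_moment_bound R N d D _ N_gt0 kN h _ _) _ => [//||].
  by move=> W; rewrite ler_nat ncover_le_profile.
apply: split_sum_bound (kappa_ratio_le1 N_gt0 beta_lt) _ _ => [||w w_large].
- exact: leq_trans (leq_maxr 2 w0) (leq_trans N_large (leqnSn N)).
- by move=> w w_small; rewrite /h /cover_profile w_small lexx ler0n.
rewrite /h /cover_profile ltnNge w_large /=.
have x_decay := kappa_ratio_decay beta N_gt0; rewrite -/eps in x_decay.
have /andP[x_ge0 _] := kappa_ratio_le1 N_gt0 beta_lt.
exact: (tail_term_small N_ge2 (leq_trans w0_gt0 w_large) (ltW C_gt0) D_le
          x_ge0 x_decay (w0_large w w_large)).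
Qed.
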